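(* Let $R=k\{x_1,\ldots,x_n;\,Q,\preceq\}$ be a PBW algebra, $M_1,\ldots,M_r$ $R$-subbimodules of $R^s$ with $M_i={}_R\langle\mathbf f^i_1,\ldots,\mathbf f^i_{t_i}\rangle_R$, and $H$ the block matrix whose first $s$ rows form $(I_s\ \cdots\ I_s)$ ($r$ copies) followed, for $i=1,\ldots,r$, by the rows $(\mathbf0,\ldots,\mathbf f^i_l,\ldots,\mathbf0)$ ($\mathbf f^i_l$ in the $i$-th block of $s$ columns), $l=1,\ldots,t_i$. Suppose $\mathrm{Syz}(H)={}_R\langle\mathbf g_1,\ldots,\mathbf g_t\rangle_R$ with $\mathbf g_k=(\mathbf g_k',\mathbf g_k'')\in(R^{\rm env})^s\times(R^{\rm env})^{\sum_jt_j}$. Then $\bigcap_{i=1}^rM_i={}_R\langle\mathfrak m^s(\mathbf g_1'),\ldots,\mathfrak m^s(\mathbf g_t')\rangle_R$. If moreover $\{\mathbf g_1,\ldots,\mathbf g_t\}$ is a left Gröbner basis of the left $R^{\rm env}$-module $\mathrm{Syz}(H)$ with respect to POT on $(R^{\rm env})^{s+\sum_jt_j}$ (built from any one of $\preceq^*,\preceq^c,\preceq_*,\preceq_c$), then $\{\mathfrak m^s(\mathbf g_1'),\ldots,\mathfrak m^s(\mathbf g_t')\}\setminus\{0\}$ is a two-sided Gröbner basis of $\bigcap_{i=1}^rM_i$ with respect to POT on $R^s$.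
   Context: $k$ is a field; $x^\alpha=x_1^{\alpha_1}\cdots x_n^{\alpha_n}$. A PBW algebra $R=k\{x_1,\ldots,x_n;Q,\preceq\}$ is a quotient of $k\langle x_1,\ldots,x_n\rangle$ by the two-sided ideal generated by $Q=\{x_jx_i-q_{ji}x_ix_j-p_{ji};\,i<j\}$, $q_{ji}\in k^*$, each $p_{ji}$ a combination of standard monomials with exponents $\prec\epsilon_i+\epsilon_j$ for an admissible order $\preceq$ (total, compatible with addition, $0$ minimal), such that the standard monomials form a $k$-basis. $R^{\rm env}=R\otimes_kR^{\rm op}$ is the PBW algebra in the variables $x_1\otimes1,\ldots,x_n\otimes1,1\otimes x_n,\ldots,1\otimes x_1$ (in this order); exponent $(\alpha,\beta)\in\mathbb N^{2n}$ corresponds to $x^\alpha\otimes x^{\beta^{\rm op}}$, $\beta^{\rm op}=(\beta_n,\ldots,\beta_1)$. With $\alpha\preceq^{\rm op}\beta$ iff $\alpha^{\rm op}\preceq\beta^{\rm op}$: $(\alpha,\beta)\prec^*(\gamma,\delta)$ iff $\beta\prec^{\rm op}\delta$ or ($\beta=\delta$, $\alpha\prec\gamma$); $(\alpha,\beta)\prec_*(\gamma,\delta)$ iff $\alpha\prec\gamma$ or ($\alpha=\gamma$, $\beta\prec^{\rm op}\delta$); $(\alpha,\beta)\prec^c(\gamma,\delta)$ iff $\alpha+\beta^{\rm op}\prec\gamma+\delta^{\rm op}$ or (equality and $\beta^{\rm op}\prec\delta^{\rm op}$); $(\alpha,\beta)\prec_c(\gamma,\delta)$ iff $\alpha+\beta^{\rm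 op}\prec\gamma+\delta^{\rm op}$ or (equality and $\alpha\prec\gamma$). For an admissible order $\le$ on $\mathbb N^m$, POT on $\mathbb N^m\times\{1,\ldots,s\}$ is: $(\alpha,i)<(\beta,j)$ iff $i>j$, or $i=j$ and $\alpha<\beta$. For $A=R$ or $R^{\rm env}$, a nonzero $\mathbf f=\sum c_{(\alpha,i)}x^\alpha\mathbf e_i\in A^s$ has $\exp(\mathbf f)$ the largest index with nonzero coefficient; $\mathrm{Exp}(L)=\{\exp(\mathbf f):0\ne\mathbf f\in L\}$; $(\alpha,i)+\mathbb N^m=\{(\alpha+\gamma,i)\}$. A finite $G\subseteq L\setminus\{0\}$ is a left Gröbner basis of a left submodule $L\subseteq A^s$ if $L={}_A\langle G\rangle$ and $\mathrm{Exp}(L)=\bigcup_{\mathbf g\in G}(\exp(\mathbf g)+\mathbb N^m)$; a finite $G\subseteq M\setminus\{0\}$ is a two-sided Gröbner basis of an $R$-subbimodule $M\subseteq R^s$ if $M={}_R\langle G\rangle_R$ and $\mathrm{Exp}(M)=\bigcup_{\mathbf g\in G}(\exp(\mathbf g)+\mathbb N^n)$. $R^q$ is a left $R^{\rm env}$-module via $(r\otimes r')\mathbf f=(rf_1r',\ldots,rf_qr')$; each $(R^{\rm env})^m$ is an $R$-bimodule via $r(a\otimes b)r'=ra\otimes br'$ (coinciding with left multiplication by $R^{\rm env}$); ${}_R\langle F\rangle_R$ is the sub-bimodule generated by $F$. $\mathfrak m^s:(R^{\rm env})^s\to R^s$ applies $\mathfrak m(r\otimes r')=rr'$ coordinatewise.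 For a matrix $H\in M_{m\times q}(R)$ with rows $\mathbf r_1,\ldots,\mathbf r_m\in R^q$, $\mathrm{Syz}(H)$ is the kernel of $(R^{\rm env})^m\to R^q$, $(h_1,\ldots,h_m)\mapsto\sum_ih_i\mathbf r_i$. *)

From HB Require Import structures.
From mathcomp Require Import all_boot all_order all_algebra.
From mathcomp Require Import mpoly.
Set Implicit Arguments. Unset Strict Implicit. Unset Printing Implicit Defensive.
Import Order.TTheory GRing.Theory.
Local Open Scope ring_scope.

Definition admissible (n : nat) (le : rel 'X_{1..n}) : Prop :=
  [/\ reflexive le, antisymmetric le, transitive le, total le &
      ((forall a b c, le a b -> le (mnm_add a c) (mnm_add b c)) /\
       (forall a, le mnm0 a))].

Definition strict (n : nat) (le : rel 'X_{1..n}) : rel 'X_{1..n} :=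
  fun a b => le a b && (a != b).

Definition mop (n : nat) (a : 'X_{1..n}) : 'X_{1..n} :=
  [multinom a (rev_ord i) | i < n].

Definition le_op (n : nat) (le : rel 'X_{1..n}) : rel 'X_{1..n} :=
  fun a b => le (mop a) (mop b).

Definition lpart (n : nat) (m : 'X_{1..n + n}) : 'X_{1..n} :=
  [multinom m (lshift n i) | i < n].
Definition rpart (n : nat) (m : 'X_{1..n + n}) : 'X_{1..n} :=
  [multinom m (rshift n i) | i < n].

Section PBW.
Variables (k : fieldType) (R : algType k) (n : nat).

Definition smono (x : 'I_n -> R) (a : 'X_{1..n}) : R :=
  \prod_(i < n) x i ^+ a i.

Definition sspan (x : 'I_n -> R) (p : {mpoly k[n]}) : R :=
  \sum_(m <- msupp p) p@_m *: smono x m.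

(* R = k{x_1,...,x_n; Q, le}: R is generated by x_1..x_n subject to the
   relations Q, and the standard monomials form a k-basis (the coordinate
   map pbw_coord is the inverse of sspan).  Since the standard monomials
   span R and satisfy Q, R is isomorphic to k<x>/(Q). *)
Record PBW := {
  pbw_x : 'I_n -> R;
  pbw_le : rel 'X_{1..n};
  pbw_coord : R -> {mpoly k[n]};
  pbw_admissible : admissible pbw_le;
  pbw_coordK : cancel pbw_coord (sspan pbw_x);
  pbw_spanK : cancel (sspan pbw_x) pbw_coord;
  pbw_rel : exists (q : 'I_n -> 'I_n -> k) (p : 'I_n -> 'I_n -> {mpoly k[n]}),
    forall i j : 'I_n, (i < j)%N ->
      [/\ q j i != 0,
          pbw_x j * pbw_x i = q j i *: (pbw_x i * pbw_x j) + sspan pbw_x (p j i) &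
          forall m, m \in msupp (p j i) ->
            strict pbw_le m (mnm_add (mnm1 i) (mnm1 j))]
}.

End PBW.

(* E is a k-algebra with an algebra morphism lam : R -> E (r |-> r(x)1)
   and an anti-morphism rho : R -> E (r |-> 1(x)r) with commuting images,
   such that the elements lam(x^alpha) rho(x^{beta^op}), (alpha,beta) in
   N^{2n}, form a k-basis of E (with coordinate map env_coord).  This
   determines E up to isomorphism as R (x)_k R^op, with the exponent
   (alpha,beta) corresponding to x^alpha (x) x^{beta^op}. *)

Section Env.
Variables (k : fieldType) (R : algType k) (n : nat) (P : PBW R n).

Definition env_basis (E : algType k) (lam rho : R -> E) (m : 'X_{1..n + n}) : E :=
  lam (smono (pbw_x P) (lpart m)) * rho (smono (pbw_x P) (mop (rpart m))).

Definition env_span (E : algType k) (lam rho : R -> E) (p : {mpoly k[n + n]}) : E :=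
  \sum_(m <- msupp p) p@_m *: env_basis lam rho m.

Record Envelope (E : algType k) := {
  env_l : R -> E;
  env_r : R -> E;
  env_coord : E -> {mpoly k[n + n]};
  env_l_add : forall a b, env_l (a + b) = env_l a + env_l b;
  env_l_scale : forall (c : k) a, env_l (c *: a) = c *: env_l a;
  env_l_mul : forall a b, env_l (a * b) = env_l a * env_l b;
  env_l_one : env_l 1 = 1;
  env_r_add : forall a b, env_r (a + b) = env_r a + env_r b;
  env_r_scale : forall (c : k) a, env_r (c *: a) = c *: env_r a;
  env_r_mul : forall a b, env_r (a * b) = env_r b * env_r a;
  env_r_one : env_r 1 = 1;
  env_comm : forall a b, env_l a * env_r b = env_r b * env_l a;
  env_coordK : cancel env_coord (env_span env_l env_r);
  env_spanK : cancel (env_span env_l env_r) env_coord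
}.

Variables (E : algType k) (Env : Envelope E).

(* left R^env-module structure of R^q: (r (x) r') f = (r f_1 r', ..., r f_q r') *)
Definition env_act (q : nat) (h : E) (f : 'rV[R]_q) : 'rV[R]_q :=
  \sum_(m <- msupp (env_coord Env h))
     map_mx (fun z => (env_coord Env h)@_m *:
                (smono (pbw_x P) (lpart m) * z
                 * smono (pbw_x P) (mop (rpart m)))) f.

(* the multiplication map m : R^env -> R, r (x) r' |-> r r' *)
Definition env_mul (h : E) : R :=
  \sum_(m <- msupp (env_coord Env h))
     (env_coord Env h)@_m *:
       (smono (pbw_x P) (lpart m) * smono (pbw_x P) (mop (rpart m))).

Definition env_mul_vec (s : nat) (v : 'rV[E]_s) : 'rV[R]_s := map_mx env_mul v.

(* R-bimodule structure on (R^env)^m: r (a (x) b) r' = ra (x) br',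
   i.e. left multiplication by r (x) r' *)
Definition env_biact (m : nat) (a : R) (v : 'rV[E]_m) (b : R) : 'rV[E]_m :=
  (env_l Env a * env_r Env b) *: v.

Definition Syz (m q : nat) (H : 'M[R]_(m, q)) (h : 'rV[E]_m) : Prop :=
  \sum_(i < m) env_act (h 0 i) (row i H) = 0.

End Env.

Definition lspan (A : pzRingType) (m : nat) (G : seq 'rV[A]_m) (v : 'rV[A]_m) : Prop :=
  exists c : 'I_(size G) -> A, v = \sum_(j < size G) c j *: G`_j.

Definition bispan (R : Type) (V : zmodType) (biact : R -> V -> R -> V)
    (G : seq V) (v : V) : Prop :=
  exists (N : nat) (a b : 'I_N -> R) (idx : 'I_N -> 'I_(size G)),
    v = \sum_(j < N) biact (a j) G`_(idx j) (b j).

Definition rbiact (R : pzRingType) (s : nat) (a : R) (v : 'rV[R]_s) (b : R) : 'rV[R]_s :=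
  map_mx (fun z => a * z * b) v.

Section Groebner.
Variables (k : fieldType) (A : pzRingType) (N : nat).
Variable (coord : A -> {mpoly k[N]}).   (* coordinates in the PBW basis of A *)
Variable (le : rel 'X_{1..N}).

Definition pot_le (m : nat) (e e' : 'X_{1..N} * 'I_m) : bool :=
  (e'.2 < e.2)%N || ((e.2 == e'.2) && le e.1 e'.1).

Definition vcoef (m : nat) (v : 'rV[A]_m) (e : 'X_{1..N} * 'I_m) : k :=
  (coord (v 0 e.2))@_(e.1).

Definition is_exp (m : nat) (v : 'rV[A]_m) (e : 'X_{1..N} * 'I_m) : Prop :=
  vcoef v e != 0 /\ forall e', vcoef v e' != 0 -> pot_le e' e.

Definition Exp (m : nat) (L : 'rV[A]_m -> Prop) (e : 'X_{1..N} * 'I_m) : Prop :=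
  exists v, [/\ L v, v != 0 & is_exp v e].

Definition in_exp_cone (m : nat) (G : seq 'rV[A]_m) (e : 'X_{1..N} * 'I_m) : Prop :=
  exists2 g, g \in G & exists e0, is_exp g e0 /\
    e.2 = e0.2 /\ exists c : 'X_{1..N}, e.1 = mnm_add e0.1 c.

Definition left_GB (m : nat) (L : 'rV[A]_m -> Prop) (G : seq 'rV[A]_m) : Prop :=
  [/\ forall g, g \in G -> L g /\ g != 0,
      forall v, L v <-> lspan G v &
      forall e, Exp L e <-> in_exp_cone G e].

Definition twosided_GB (m : nat) (biact : A -> 'rV[A]_m -> A -> 'rV[A]_m)
    (L : 'rV[A]_m -> Prop) (G : seq 'rV[A]_m) : Prop :=
  [/\ forall g, g \in G -> L g /\ g != 0,
      forall v, L v <-> bispan biact G v &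
      forall e, Exp L e <-> in_exp_cone G e].

End Groebner.

Inductive env_order_kind := Ord_star | Ord_c | Ord_lstar | Ord_lc.

Definition env_order (n : nat) (le : rel 'X_{1..n}) (o : env_order_kind)
    : rel 'X_{1..n + n} :=
  fun m m' =>
    let a := lpart m in let b := rpart m in
    let c := lpart m' in let d := rpart m' in
    match o with
    | Ord_star => strict (le_op le) b d || ((b == d) && le a c)
    | Ord_lstar => strict le a c || ((a == c) && le_op le b d)
    | Ord_c => strict le (mnm_add a (mop b)) (mnm_add c (mop d))
               || ((mnm_add a (mop b) == mnm_add c (mop d)) && le (mop b) (mop d))
    | Ord_lc => strict le (mnm_add a (mop b)) (mnm_add c (mop d))
               || ((mnm_add a (mop b) == mnm_add c (mop d)) && le a c)
    end.

Section BlockH.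
Variables (R : pzRingType) (s r : nat) (t : 'I_r -> nat).
Variable (f : forall i : 'I_r, 'I_(t i) -> 'rV[R]_s).

(* columns of H are indexed by r blocks of s columns: R^(r*s) = mxvec of r x s *)
Definition H_top : 'M[R]_(s, r * s) :=
  \matrix_(j < s) mxvec (\matrix_(i' < r, j' < s) (j' == j)%:R).

Definition H_block (i : 'I_r) : 'M[R]_(t i, r * s) :=
  \matrix_(l < t i) mxvec (\matrix_(i' < r, j' < s) if i' == i then @f i l 0 j' else 0).

Definition H_mat : 'M[R]_(s + \sum_i t i, r * s) :=
  col_mx H_top (mxcol H_block).

End BlockH.

Arguments env_biact {k R n P E} Env {m} a v b.
Arguments rbiact {R s} a v b.

From HB Require Import structures.
From mathcomp Require Import all_boot all_order all_algebra.
From mathcomp Require Import mpoly.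
From Stdlib Require Import Classical IndefiniteDescription.
Set Implicit Arguments. Unset Strict Implicit. Unset Printing Implicit Defensive.
Import GRing.Theory.
Local Open Scope ring_scope.

(* The columns of the i-th block of H say that a syzygy (h', h'') satisfies
   m^s(h') = - sum_l h''_(i,l) f^i_l, so m^s(h') lies in every M_i; conversely
   v in all M_i, written v = sum_l c_(i,l) f^i_l, gives the syzygy (v (x) 1, -c).
   As m^s(a h b) = a m^s(h) b, m^s maps the bimodule spanned by the g_k onto the
   one spanned by the m^s(g'_k).
   For the Groebner part, lift v to the syzygy whose first block is v (x) 1 (for
   [<=^*], [<=^c]) or 1 (x) v (for [<=_*], [<=_c]): its POT-leading index is the
   embedded leading index of v, so some g_k has leading index dividing it.  That
   leading exponent is itself embedded, and every other monomial of g'_k in the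
   same position has a strictly smaller product exponent; since x^a x^b has
   leading exponent a + b in a PBW algebra (the relations only create smaller
   terms, and admissible orders are well-founded by Dickson's lemma),
   m^s(g'_k) has the image leading exponent.  Multiplying the m^s(g'_k) by
   standard monomials on the left realises the whole cone. *)

Section LinearExtension.
Variables (k : fieldType) (N : nat) (V : lmodType k).
Implicit Types (p q : {mpoly k[N]}) (F : 'X_{1..N} -> V).

Definition lin F p : V := \sum_(m <- msupp p) p@_m *: F m.

Lemma lin_supp F p (S : seq 'X_{1..N}) : uniq S -> {subset msupp p <= S} ->
  lin F p = \sum_(m <- S) p@_m *: F m.
Proof.
move=> uS sub; rewrite /lin [RHS](bigID (fun m => m \in msupp p)) /=.
rewrite [X in _ + X]big1 ?addr0; last first.
  by move=> m /memN_msupp_eq0 ->; rewrite scale0r.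
rewrite -[RHS]big_filter; apply: perm_big; apply: uniq_perm.
- exact: msupp_uniq.
- exact: filter_uniq.
by move=> m; rewrite mem_filter; case: (boolP (m \in msupp p)) => // /sub ->.
Qed.

Lemma linD F p q : lin F (p + q) = lin F p + lin F q.
Proof.
set S := undup (msupp p ++ msupp q).
have sub_p : {subset msupp p <= S} by move=> m hm; rewrite mem_undup mem_cat hm.
have sub_q : {subset msupp q <= S} by move=> m hm; rewrite mem_undup mem_cat hm orbT.
have sub_pq : {subset msupp (p + q) <= S} by move=> m /msuppD_le; rewrite mem_undup.
rewrite !(@lin_supp F _ S) ?undup_uniq // -big_split /=.
by apply: eq_bigr => m _; rewrite mcoeffD scalerDl.
Qed.

Lemma linZ F c p : lin F (c *: p) = c *: lin F p.
Proof.
rewrite (@lin_supp F (c *: p) (msupp p)) ?msupp_uniq //; last exact: msuppZ_le.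
by rewrite /lin scaler_sumr; apply: eq_bigr => m _; rewrite mcoeffZ scalerA.
Qed.

Lemma lin0 F : lin F 0 = 0.
Proof. by rewrite /lin msupp0 big_nil. Qed.


Lemma linX F m : lin F 'X_[m] = F m.
Proof. by rewrite /lin msuppX big_seq1 mcoeffX eqxx scale1r. Qed.


Lemma eq_lin F1 F2 p : {in msupp p, F1 =1 F2} -> lin F1 p = lin F2 p.
Proof. by move=> h; rewrite /lin !big_seq; apply: eq_bigr => m /h ->. Qed.

Lemma lin_inv_linear F (cd : V -> {mpoly k[N]}) :
  cancel cd (lin F) -> cancel (lin F) cd ->
  [/\ forall u v, cd (u + v) = cd u + cd v, forall c u, cd (c *: u) = c *: cd u
    & cd 0 = 0].
Proof.
move=> cdK linK; split.
- by move=> u v; apply: (can_inj linK); rewrite linD !cdK.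
- by move=> c u; apply: (can_inj linK); rewrite linZ !cdK.
- by apply: (can_inj linK); rewrite lin0 cdK.
Qed.

End LinearExtension.

Section MonomialReindex.
Variables (k : fieldType) (n N : nat) (top : 'X_{1..n} -> 'X_{1..N}).
Hypothesis top_inj : injective top.
Implicit Type p : {mpoly k[n]}.

Local Notation reindex p := (\sum_(a <- msupp p) p@_a *: 'X_[top a]).

Lemma mcoeff_reindex_sum p m :
  (reindex p)@_m = \sum_(a <- msupp p) p@_a * (top a == m)%:R.
Proof.
rewrite (big_morph (mcoeff m) (@mcoeffD _ _ m) (@mcoeff0 _ _ m)).
by apply: eq_bigr => a _; rewrite mcoeffZ mcoeffX.
Qed.

Lemma mcoeff_reindex p b : (reindex p)@_(top b) = p@_b.
Proof.
rewrite mcoeff_reindex_sum {3}(mpolyE p).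
rewrite (big_morph (mcoeff b) (@mcoeffD _ _ b) (@mcoeff0 _ _ b)).
by apply: eq_bigr => a _; rewrite mcoeffZ mcoeffX (inj_eq top_inj).
Qed.

Lemma mcoeff_reindex_neq0 p m : (reindex p)@_m != 0 -> exists a, m = top a /\ p@_a != 0.
Proof.
rewrite mcoeff_reindex_sum => /eqP m_ne0; apply: NNPP => no_a; apply: m_ne0.
apply: big1_seq => a _; case: (eqVneq (top a) m) => [ea | _]; last by rewrite mulr0.
case: (eqVneq p@_a 0) => [-> | pa]; first by rewrite mul0r.
by case: no_a; exists a; rewrite ea.
Qed.

End MonomialReindex.

Section Dickson.

Lemma exists_argmin_from (h : nat -> nat) (M : nat) :
  exists i, (M <= i)%N /\ forall j, (M <= j)%N -> (h i <= h j)%N.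
Proof.
apply: NNPP => no_min.
suff : forall v i, (M <= i)%N -> h i <> v by move/(_ (h M) M (leqnn _)).
elim/ltn_ind => v IH i Mi hiv; apply: no_min; exists i; split=> // j Mj.
by rewrite leqNgt; apply/negP => lt_hj; apply: (IH (h j)) Mj erefl; rewrite -hiv.
Qed.

Lemma nondecreasing_subseq (h : nat -> nat) :
  exists g : nat -> nat, {homo g : i j / (i < j)%N} /\
    {homo h \o g : i j / (i <= j)%N >-> (i <= j)%N}.
Proof.
have [am Ham] : exists am : nat -> nat, forall M, (M <= am M)%N /\
    forall j, (M <= j)%N -> (h (am M) <= h j)%N.
  exact: functional_choice (exists_argmin_from h).
pose g := fix g i := if i is i'.+1 then am (g i').+1 else am 0.
have g_incr i : (g i < g i.+1)%N by case: (Ham (g i).+1).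
exists g; split; first exact: homo_ltn ltn_trans g_incr.
apply: homo_leq leq_trans _ => [//|]; case=> [|i] /=.
  by case: (Ham 0) => _; apply; case: (Ham 1).
by case: (Ham (g i).+1) => _; apply; exact: ltn_trans (g_incr i) (g_incr i.+1).
Qed.

Variable n : nat.

Lemma dickson (f : nat -> 'X_{1..n}) : exists i j, (i < j)%N /\ (f i <= f j)%MM.
Proof.
suff : forall c, (c <= n)%N -> exists g : nat -> nat, {homo g : i j / (i < j)%N} /\
    forall (x : 'I_n) i j, (x < c)%N -> (i <= j)%N -> (f (g i) x <= f (g j) x)%N.
  move=> /(_ n (leqnn _)) [g [g_incr g_mono]]; exists (g 0), (g 1).
  by split; [exact: g_incr | apply/mnm_lepP => x; exact: g_mono].
elim=> [|c IH] cn; first by exists id; split=> // x.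
have [g [g_incr g_mono]] := IH (ltnW cn).
have [g2 [g2_incr g2_mono]] := nondecreasing_subseq (fun i => f (g i) (Ordinal cn)).
exists (g \o g2); split=> [i j ij|x i j]; first exact: g_incr (g2_incr _ _ ij).
rewrite ltnS leq_eqVlt => /orP[/eqP xc|xc] ij.
  by rewrite (_ : x = Ordinal cn); [exact: g2_mono | exact: val_inj].
exact: g_mono (ltnW_homo g2_incr ij).
Qed.

End Dickson.

Section Admissible.
Variables (n : nat) (le : rel 'X_{1..n}).
Hypothesis adm : admissible le.
Local Notation lt := (strict le).

Lemma adm_refl : reflexive le. Proof. by case: adm. Qed.
Lemma adm_anti : antisymmetric le. Proof. by case: adm. Qed.
Lemma adm_trans : transitive le. Proof. by case: adm. Qed.
Lemma adm_addr a b c : le a b -> le (a + c)%MM (b + c)%MM.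
Proof. by case: adm => _ _ _ _ [h _]; apply: h. Qed.
Lemma adm_ge0 a : le 0%MM a.
Proof. by case: adm => _ _ _ _ [_ h]; apply: h. Qed.


Lemma adm_le0 a : le a 0%MM -> a = 0%MM.
Proof. by move=> h; apply: adm_anti; rewrite h adm_ge0. Qed.

Lemma adm_lem a b : (a <= b)%MM -> le a b.
Proof. by move=> /submK <-; rewrite -{1}(add0m a); apply: adm_addr; exact: adm_ge0. Qed.

Lemma adm_ltW a b : lt a b -> le a b. Proof. by case/andP. Qed.

Lemma adm_lt_le_trans a b c : lt a b -> le b c -> lt a c.
Proof.
case/andP=> ab nab bc; rewrite /strict (adm_trans ab bc); apply/eqP=> ac.
by move: nab; rewrite ac in ab *; rewrite (@adm_anti b c) ?ab ?bc ?eqxx.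
Qed.

Lemma adm_le_lt_trans a b c : le a b -> lt b c -> lt a c.
Proof.
move=> ab /andP[bc nbc]; rewrite /strict (adm_trans ab bc); apply/eqP=> ac.
by move: nbc; rewrite -ac in bc *; rewrite (@adm_anti b a) ?ab ?bc ?eqxx.
Qed.

Lemma adm_lt_addr a b c : lt a b -> lt (a + c)%MM (b + c)%MM.
Proof. by case/andP=> h1 h2; rewrite /strict adm_addr // eqm_add2r h2. Qed.

Lemma adm_lt_addl a b c : lt a b -> lt (c + a)%MM (c + b)%MM.
Proof. by rewrite ![(c + _)%MM]addmC; apply: adm_lt_addr. Qed.

Lemma adm_lt_mnm1 i a : lt a (U_(i) + a)%MM.
Proof.
rewrite /strict -{1}(add0m a) adm_addr ?adm_ge0 //=.
apply/eqP => /(congr1 (fun m : 'X_{1..n} => m i)).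
by rewrite mnmDE mnm1E eqxx add1n => /n_Sn.
Qed.

(* Dickson's lemma rules out infinite descending chains. *)
Lemma admissible_wf : well_founded lt.
Proof.
move=> a; apply: NNPP => not_acc.
have [down Hdown] : exists down : 'X_{1..n} -> 'X_{1..n}, forall x,
    ~ Acc lt x -> lt (down x) x /\ ~ Acc lt (down x).
  apply: (functional_choice (fun x y => ~ Acc lt x -> lt y x /\ ~ Acc lt y)) => x.
  case: (classic (Acc lt x)) => [acc_x | nacc_x]; first by exists x.
  apply: NNPP => no_y; apply: nacc_x; constructor => y lt_yx.
  by apply: NNPP => nacc_y; apply: no_y; exists y.
pose f i := iter i down a.
have nacc_f i : ~ Acc lt (f i) by elim: i => [|i IH] //=; case: (Hdown _ IH).
have f_desc : {homo f : i j / (i < j)%N >-> lt j i}.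
  apply: homo_ltn => [y x z yx zy|i]; first exact: adm_lt_le_trans zy (adm_ltW yx).
  by case: (Hdown _ (nacc_f i)).
have [i [j [ij /adm_lem le_ij]]] := dickson f.
by case/andP: (f_desc _ _ ij) => le_ji; rewrite (@adm_anti (f j) (f i)) ?le_ij ?le_ji ?eqxx.
Qed.

End Admissible.

Section PBWAlgebra.
Variables (k : fieldType) (R : algType k) (n : nat) (P : PBW R n).
Local Notation x := (pbw_x P).
Local Notation le := (pbw_le P).
Local Notation lt := (strict le).
Local Notation coord := (pbw_coord P).
Let adm := pbw_admissible P.

Lemma pbw_coord_linear :
  [/\ forall a b, coord (a + b) = coord a + coord b,
      forall c a, coord (c *: a) = c *: coord a & coord 0 = 0].
Proof. exact: lin_inv_linear (pbw_coordK P) (pbw_spanK P). Qed.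

Lemma pbw_coordD a b : coord (a + b) = coord a + coord b.
Proof. by case: pbw_coord_linear. Qed.
Lemma pbw_coordZ c a : coord (c *: a) = c *: coord a.
Proof. by case: pbw_coord_linear. Qed.
Lemma pbw_coord0 : coord 0 = 0.
Proof. by case: pbw_coord_linear. Qed.
Lemma pbw_coordB a b : coord (a - b) = coord a - coord b.
Proof. by rewrite pbw_coordD -scaleN1r pbw_coordZ scaleN1r. Qed.
Lemma pbw_coord_smono m : coord (smono x m) = 'X_[m].
Proof. by rewrite -(linX (smono x) m) (pbw_spanK P). Qed.
Lemma pbw_coord_eq0 a : coord a = 0 -> a = 0.
Proof. by move=> h; rewrite -(pbw_coordK P a) h /sspan msupp0 big_nil. Qed.
Lemma pbw_expand a : a = \sum_(m <- msupp (coord a)) (coord a)@_m *: smono x m.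
Proof. by rewrite -{1}(pbw_coordK P a). Qed.

Definition supp_le D a := forall m, m \in msupp (coord a) -> le m D.
Definition supp_lt D a := forall m, m \in msupp (coord a) -> lt m D.
Definition has_lead D a := (coord a)@_D != 0 /\ supp_le D a.

Lemma supp_lt0 D : supp_lt D 0.
Proof. by move=> m; rewrite pbw_coord0 msupp0. Qed.
Lemma supp_ltD D a b : supp_lt D a -> supp_lt D b -> supp_lt D (a + b).
Proof.
move=> ha hb m; rewrite pbw_coordD => /msuppD_le.
by rewrite mem_cat => /orP[/ha|/hb].
Qed.
Lemma supp_ltZ D c a : supp_lt D a -> supp_lt D (c *: a).
Proof. by move=> ha m; rewrite pbw_coordZ => /msuppZ_le /ha. Qed.
Lemma supp_lt_sum D (I : Type) (r : seq I) (Q : pred I) (F : I -> R) :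
  (forall i, Q i -> supp_lt D (F i)) -> supp_lt D (\sum_(i <- r | Q i) F i).
Proof. by move=> h; apply: big_ind => //; [exact: supp_lt0 | exact: supp_ltD]. Qed.
Lemma supp_le_lt D1 D a : supp_le D1 a -> lt D1 D -> supp_lt D a.
Proof. by move=> h h2 m /h hm; apply: adm_le_lt_trans hm h2. Qed.
Lemma supp_lt_coef D a : supp_lt D a -> (coord a)@_D = 0.
Proof.
move=> h; apply/eqP; rewrite mcoeff_eq0; apply/negP => /h.
by rewrite /strict eqxx andbF.
Qed.

Lemma has_lead_smono D : has_lead D (smono x D).
Proof.
rewrite /has_lead pbw_coord_smono mcoeffX eqxx oner_neq0; split=> // m.
by rewrite pbw_coord_smono msuppX inE => /eqP ->; exact: adm_refl.
Qed.
Lemma has_leadD D a b : has_lead D a -> supp_lt D b -> has_lead D (a + b).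
Proof.
case=> ha1 ha2 hb; split; first by rewrite pbw_coordD mcoeffD (supp_lt_coef hb) addr0.
move=> m; rewrite pbw_coordD => /msuppD_le.
by rewrite mem_cat => /orP[/ha2 // | /hb /adm_ltW].
Qed.
Lemma has_leadZ D c a : c != 0 -> has_lead D a -> has_lead D (c *: a).
Proof.
move=> c0 [h1 h2]; split; first by rewrite pbw_coordZ mcoeffZ mulf_neq0.
by move=> m; rewrite pbw_coordZ => /msuppZ_le /h2.
Qed.
Lemma has_lead_decomp D a : has_lead D a ->
  exists2 c, c != 0 & exists2 a', supp_lt D a' & a = c *: smono x D + a'.
Proof.
case=> cD0 hle; exists (coord a)@_D => //.
exists (a - (coord a)@_D *: smono x D); last by rewrite addrC subrK.
move=> m; rewrite pbw_coordB pbw_coordZ pbw_coord_smono mcoeff_msupp.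
rewrite mcoeffB mcoeffZ mcoeffX; have [->|neq] := eqVneq D m.
  by rewrite mulr1 subrr eqxx.
by rewrite mulr0 subr0 -mcoeff_msupp => /hle hm; rewrite /strict hm eq_sym neq.
Qed.

Lemma supp_lt_map (phi : R -> R) (sh : 'X_{1..n} -> 'X_{1..n}) D1 D a :
  {morph phi : u v / u + v} -> scalable phi -> phi 0 = 0 ->
  (forall m, lt m D1 -> supp_le (sh m) (phi (smono x m)) /\ lt (sh m) D) ->
  supp_lt D1 a -> supp_lt D (phi a).
Proof.
move=> phiD phiZ phi0 hm ha; rewrite (pbw_expand a) (big_morph phi phiD phi0) big_seq.
by apply: supp_lt_sum => m /ha /hm [h1 h2]; rewrite phiZ; exact: supp_ltZ (supp_le_lt h1 h2).
Qed.

Lemma smono0 : smono x 0%MM = 1.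
Proof. by rewrite /smono big1 // => i _; rewrite mnm0E expr0. Qed.

Lemma filter_enum_ord_geq (i : 'I_n) :
  [seq j : 'I_n <- enum 'I_n | (i <= j)%N] = i :: [seq j : 'I_n <- enum 'I_n | (i < j)%N].
Proof.
have val_filter (Q : pred nat) :
    map val [seq j : 'I_n <- enum 'I_n | Q j] = [seq m <- iota 0 n | Q m].
  by rewrite -val_enum_ord filter_map.
have filter_iota_geq a m : (a <= m)%N -> [seq j <- iota 0 m | (a <= j)%N] = iota a (m - a).
  move=> am; rewrite -{1}(subnKC am) iotaD filter_cat add0n.
  rewrite (eq_in_filter (a2 := pred0)) ?filter_pred0; last first.
    by move=> j; rewrite mem_iota add0n /= => ja; rewrite leqNgt ja.
  by rewrite (eq_in_filter (a2 := predT)) ?filter_predT // => j; rewrite mem_iota => /andP[].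
apply: (inj_map val_inj); rewrite /= !val_filter.
rewrite filter_iota_geq 1?ltnW // (filter_iota_geq i.+1) //.
by rewrite -(subnSK (ltn_ord i)).
Qed.

Lemma smono_from (i : 'I_n) (c : 'X_{1..n}) : (forall j : 'I_n, (j < i)%N -> c j = 0%N) ->
  smono x c = x i ^+ c i * \prod_(j <- [seq j : 'I_n <- enum 'I_n | (i < j)%N]) x j ^+ c j.
Proof.
move=> c_lt; transitivity
  (\prod_(j <- i :: [seq j : 'I_n <- enum 'I_n | (i < j)%N]) x j ^+ c j); last first.
  by rewrite big_cons.
rewrite -filter_enum_ord_geq big_filter big_mkcond /smono.
rewrite [LHS](_ : _ = \prod_(j <- enum 'I_n) x j ^+ c j); last by rewrite enumT.
apply: eq_bigr => j _.
by case: leqP => // /c_lt ->; rewrite expr0.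
Qed.

Lemma mulx_smono (i : 'I_n) (c : 'X_{1..n}) : (forall j : 'I_n, (j < i)%N -> c j = 0%N) ->
  x i * smono x c = smono x (U_(i) + c)%MM.
Proof.
move=> c_lt; have Uc_lt (j : 'I_n) : (j < i)%N -> (U_(i) + c)%MM j = 0%N.
  by move=> ji; rewrite mnmDE mnm1E c_lt // addn0; case: eqP ji => [->|]; rewrite ?ltnn.
rewrite (smono_from c_lt) (smono_from Uc_lt) mnmDE mnm1E eqxx add1n exprS mulrA.
congr (_ * _); apply: eq_big_seq => j; rewrite mem_filter => /andP[ij _].
by rewrite mnmDE mnm1E; case: eqP ij => [->|]; rewrite ?ltnn.
Qed.

Lemma smono_mnm1 i : smono x U_(i)%MM = x i.
Proof. by rewrite -[U_(i)%MM]addm0 -mulx_smono ?smono0 ?mulr1 // => j _; rewrite mnm0E. Qed.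

Lemma smono_first_var (a : 'X_{1..n}) : a != 0%MM ->
  exists i : 'I_n, exists a' : 'X_{1..n}, [/\ a = (U_(i) + a')%MM,
     smono x a = x i * smono x a' & forall j : 'I_n, (j < i)%N -> a' j = 0%N].
Proof.
move=> a0; case: (pickP (fun i => a i != 0%N)) => [i0 ai0 | a_eq0]; last first.
  by case/eqP: a0; apply/mnmP => i; rewrite mnm0E; apply/eqP/negbFE/a_eq0.
case: (@arg_minnP _ i0 (fun i => a i != 0%N) val ai0) => i ai i_min; exists i, (a - U_(i))%MM.
have a'_lt (j : 'I_n) : (j < i)%N -> (a - U_(i))%MM j = 0%N.
  move=> ji; rewrite mnmBE; case: (eqVneq (a j) 0%N) => [-> // | /i_min].
  by rewrite leqNgt ji.
have ea : a = (U_(i) + (a - U_(i)))%MM by rewrite addmC submK // lep1mP.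
by split=> //; rewrite mulx_smono // -ea.
Qed.

Definition lead_smonoM_below D :=
  forall D', lt D' D -> forall a b, (a + b)%MM = D' -> has_lead D' (smono x a * smono x b).

Section ProductBelow.
Variable D : 'X_{1..n}.
Hypothesis IH : lead_smonoM_below D.

Lemma supp_lt_mulx j D1 a : le (U_(j) + D1)%MM D -> supp_lt D1 a -> supp_lt D (x j * a).
Proof.
move=> hD; apply: (@supp_lt_map (fun z => x j * z) (fun m => U_(j) + m)%MM).
- by move=> u v; rewrite mulrDr.
- by move=> c u; rewrite scalerAr.
- by rewrite mulr0.
move=> m hm; have lt_mD : lt (U_(j) + m)%MM D by apply/adm_lt_le_trans/hD/adm_lt_addl.
by split=> //; rewrite -smono_mnm1; case: (IH lt_mD erefl).
Qed.

Lemma has_lead_mulx_smono i c : (U_(i) + c)%MM = D -> has_lead D (x i * smono x c).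
Proof.
have [q [p pbw_q]] := pbw_rel P; move=> eD.
case: (classic (exists j : 'I_n, (j < i)%N /\ c j != 0%N)) => [[j0 [j0i cj0]] | c_ord];
  last first.
  rewrite mulx_smono -?eD; first exact: has_lead_smono.
  by move=> j ji; apply/eqP; apply: NNPP => cj; apply: c_ord; exists j; split=> //; exact/negP.
have c0 : c != 0%MM by apply: contra_neq cj0 => ->; rewrite mnm0E.
have [j [c' [ec ec' c'_lt]]] := smono_first_var c0.
have ji : (j < i)%N.
  rewrite ltnNge; apply/negP => ij.
  have : c j0 = (j == j0) :> nat.
    by rewrite ec mnmDE mnm1E c'_lt ?addn0 //; exact: leq_trans j0i ij.
  case: eqP => [ej _ | _ cj0_0]; first by move: j0i; rewrite -ej ltnNge ij.
  by rewrite cj0_0 in cj0.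
have [qji rel_ji p_lt] := pbw_q j i ji.
rewrite ec' mulrA rel_ji mulrDl -scalerAl -mulrA.
have eD' : D = (U_(j) + (U_(i) + c'))%MM by rewrite -eD ec addmA [(U_(i) + U_(j))%MM]addmC addmA.
have lt_iD : lt (U_(i) + c')%MM D by rewrite eD'; exact: adm_lt_mnm1.
have [lam lam0 [A hA eA]] := has_lead_decomp (IH lt_iD erefl).
rewrite -[x i](smono_mnm1 i) eA mulrDr -scalerAr mulx_smono; last first.
  move=> j' j'j; rewrite mnmDE mnm1E c'_lt // addn0.
  by case: eqP (ltn_trans j'j ji) => [->|]; rewrite ?ltnn.
rewrite -eD' scalerDr scalerA -addrA; apply: has_leadD.
  by apply: has_leadZ; [rewrite mulf_neq0 | exact: has_lead_smono].
apply: supp_ltD; first by apply/supp_ltZ/(supp_lt_mulx _ hA); rewrite -eD' adm_refl.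
apply: (@supp_lt_map (fun z => z * smono x c') (fun m => m + c')%MM (U_(j) + U_(i))%MM).
- by move=> u v; rewrite mulrDl.
- by move=> cc u; rewrite scalerAl.
- by rewrite mul0r.
- move=> m hm; have lt_mD : lt (m + c')%MM D by rewrite eD' addmA; exact: adm_lt_addr.
  by split=> //; case: (IH lt_mD erefl).
by move=> m; rewrite (pbw_spanK P) => /p_lt.
Qed.

End ProductBelow.

Theorem has_lead_smonoM a b : has_lead (a + b)%MM (smono x a * smono x b).
Proof.
suff : forall D a b, (a + b)%MM = D -> has_lead D (smono x a * smono x b) by apply.
elim/(well_founded_induction (admissible_wf adm)) => D IHD {}a {}b eD. have [a0|a0] := eqVneq a 0%MM.
  by rewrite -eD a0 smono0 mul1r add0m; exact: has_lead_smono.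
have [j [a' [ea ea' _]]] := smono_first_var a0.
have eD' : D = (U_(j) + (a' + b))%MM by rewrite -eD ea addmA.
have lt_a'D : lt (a' + b)%MM D by rewrite eD'; exact: adm_lt_mnm1.
have [lam lam0 [A hA eA]] := has_lead_decomp (IHD _ lt_a'D _ _ erefl).
rewrite ea' -mulrA eA mulrDr -scalerAr; apply: has_leadD.
  by apply: (has_leadZ lam0); apply: (has_lead_mulx_smono IHD); rewrite eD'.
by apply: (supp_lt_mulx IHD _ hA); rewrite -eD' adm_refl.
Qed.

Lemma has_lead_smonoMl c D a : has_lead D a -> has_lead (c + D)%MM (smono x c * a).
Proof.
case/has_lead_decomp=> lam lam0 [a' ha' ->].
rewrite mulrDr -scalerAr; apply: has_leadD; first exact/has_leadZ/has_lead_smonoM.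
apply: (@supp_lt_map (fun z => smono x c * z) (fun m => c + m)%MM D) => //.
- by move=> u v; rewrite mulrDr.
- by move=> cc u; rewrite scalerAr.
- by rewrite mulr0.
by move=> m hm; split; [case: (has_lead_smonoM c m) | exact: adm_lt_addl].
Qed.

End PBWAlgebra.

Section EnvExponents.
Variable n : nat.
Implicit Types (a b : 'X_{1..n}) (m : 'X_{1..n + n}).

Definition join a b : 'X_{1..n + n} :=
  [multinom (match split i with inl i' => a i' | inr i' => b i' end) | i < n + n].

(* The leading exponent of [x^alpha x^(beta^op)], the product of
   [x^alpha (x) x^(beta^op)]. *)
Definition env_mul_exp m : 'X_{1..n} := (lpart m + mop (rpart m))%MM.

Lemma lpart_join a b : lpart (join a b) = a.
Proof. by apply/mnmP => i; rewrite !mnmE (unsplitK (inl i : 'I_n + 'I_n)). Qed.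
Lemma rpart_join a b : rpart (join a b) = b.
Proof. by apply/mnmP => i; rewrite !mnmE (unsplitK (inr i : 'I_n + 'I_n)). Qed.
Lemma join_parts m : join (lpart m) (rpart m) = m.
Proof. by apply/mnmP => i; rewrite mnmE -[in RHS](splitK i); case: (split i) => j; rewrite mnmE. Qed.
Lemma join_inj a b c d : join a b = join c d -> a = c /\ b = d.
Proof.
by move=> e; split; [move/(congr1 (@lpart n)): e | move/(congr1 (@rpart n)): e];
  rewrite ?lpart_join ?rpart_join.
Qed.
Lemma lpartD m1 m2 : lpart (m1 + m2)%MM = (lpart m1 + lpart m2)%MM.
Proof. by apply/mnmP => i; rewrite !mnmE. Qed.
Lemma rpartD m1 m2 : rpart (m1 + m2)%MM = (rpart m1 + rpart m2)%MM.
Proof. by apply/mnmP => i; rewrite !mnmE. Qed.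

Lemma mopK : involutive (@mop n).
Proof. by move=> a; apply/mnmP => i; rewrite !mnmE rev_ordK. Qed.
Lemma mop_inj : injective (@mop n). Proof. exact: inv_inj mopK. Qed.
Lemma mopD a b : mop (a + b)%MM = (mop a + mop b)%MM.
Proof. by apply/mnmP => i; rewrite !mnmE. Qed.
Lemma mop0 : mop 0%MM = 0%MM :> 'X_{1..n}.
Proof. by apply/mnmP => i; rewrite !mnmE. Qed.
Lemma mop_eq0 a : mop a = 0%MM -> a = 0%MM.
Proof. by move=> h; apply: mop_inj; rewrite h mop0. Qed.

Lemma env_mul_exp_join a b : env_mul_exp (join a (mop b)) = (a + b)%MM.
Proof. by rewrite /env_mul_exp lpart_join rpart_join mopK. Qed.

Definition left_kind (o : env_order_kind) : bool :=
  if o is (Ord_star | Ord_c) then true else false.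

(* The exponent of [a (x) 1] for the orders [<=^*], [<=^c] and of [1 (x) a]
   for [<=_*], [<=_c]. *)
Definition embed_exp o a : 'X_{1..n + n} :=
  if left_kind o then join a 0%MM else join 0%MM (mop a).

Lemma embed_exp_inj o : injective (embed_exp o).
Proof.
move=> a b; rewrite /embed_exp; case: ifP => _ /join_inj [] //.
by move=> _ /mop_inj.
Qed.

Lemma env_mul_exp_embed o a : env_mul_exp (embed_exp o a) = a.
Proof.
rewrite /embed_exp; case: ifP => _; last by rewrite env_mul_exp_join add0m.
by rewrite /env_mul_exp lpart_join rpart_join mop0 addm0.
Qed.

Lemma embed_exp_addE o a M C : embed_exp o a = (M + C)%MM ->
  M = embed_exp o (env_mul_exp M) /\ exists c, a = (env_mul_exp M + c)%MM.
Proof.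
rewrite /embed_exp /env_mul_exp; case: ifP => _ e.
- have : rpart M = 0%MM.
    apply/eqP; move/(congr1 (@rpart n))/esym/eqP: e.
    by rewrite rpart_join rpartD mnmD_eq0 => /andP[].
  move=> rM; rewrite rM mop0 addm0 -{1}(join_parts M) rM; split=> //.
  by exists (lpart C); move/(congr1 (@lpart n)): e; rewrite lpart_join lpartD.
- have : lpart M = 0%MM.
    apply/eqP; move/(congr1 (@lpart n))/esym/eqP: e.
    by rewrite lpart_join lpartD mnmD_eq0 => /andP[].
  move=> lM; rewrite lM add0m mopK -{1}(join_parts M) lM; split=> //.
  exists (mop (rpart C)); rewrite -mopD -rpartD -e rpart_join mopK //.
Qed.

Section Orders.
Variable le : rel 'X_{1..n}.
Hypothesis adm : admissible le.
Local Notation lt := (strict le).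

Lemma env_order_embed_exp o a b : le a b -> env_order le o (embed_exp o a) (embed_exp o b).
Proof.
move=> ab; rewrite /env_order /embed_exp.
case: o; rewrite /= !lpart_join !rpart_join /strict /le_op ?mop0 ?mopK ?addm0 ?add0m
  ?eqxx ?andbF ?ab //=; by case: eqP; rewrite ?adm_refl ?orbT.
Qed.

(* One half of [embed_exp o b] is zero, and each of the four orders forces the
   same half of [m] to vanish. *)
Lemma env_mul_exp_lt o b m : env_order le o m (embed_exp o b) -> m != embed_exp o b ->
  lt (env_mul_exp m) b.
Proof.
rewrite -{3}(env_mul_exp_embed o b) /env_order /embed_exp /env_mul_exp.
case: o => /=; rewrite /strict /le_op !lpart_join !rpart_join ?mop0 ?mopK ?addm0 ?add0m.
- case/orP=> [/andP[/(adm_le0 adm)/mop_eq0 -> /eqP[]] // | /andP[/eqP rm lmb] nm].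
  rewrite rm mop0 addm0 lmb; apply: contra nm => /eqP lm.
  by rewrite -(join_parts m) lm rm.
- case/orP=> [// | /andP[/eqP e /(adm_le0 adm)/mop_eq0 rm] nm].
  by move: e; rewrite rm mop0 !addm0 => lm; case/eqP: nm; rewrite -(join_parts m) lm rm.
- case/orP=> [/andP[/(adm_le0 adm) -> /eqP[]] // | /andP[/eqP lm rmb] nm].
  rewrite lm add0m rmb; apply: contra nm => /eqP rm.
  by rewrite -(join_parts m) lm -rm mopK.
- case/orP=> [// | /andP[/eqP e /(adm_le0 adm) lm] nm].
  move: e; rewrite lm !add0m => rm; case/eqP: nm.
  by rewrite -(join_parts m) lm -rm mopK.
Qed.

End Orders.

End EnvExponents.

Section Envelope.
Variables (k : fieldType) (R : algType k) (n : nat) (P : PBW R n).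
Variables (E : algType k) (Env : Envelope P E).
Local Notation x := (pbw_x P).
Local Notation coord := (pbw_coord P).
Local Notation lam := (env_l Env).
Local Notation rho := (env_r Env).
Local Notation ecoord := (env_coord Env).
Local Notation basis := (env_basis P lam rho).

Lemma env_coord_linear :
  [/\ forall a b, ecoord (a + b) = ecoord a + ecoord b,
      forall c a, ecoord (c *: a) = c *: ecoord a & ecoord 0 = 0].
Proof. exact: lin_inv_linear (env_coordK Env) (env_spanK Env). Qed.

Lemma env_coordD a b : ecoord (a + b) = ecoord a + ecoord b.
Proof. by case: env_coord_linear. Qed.
Lemma env_coordZ c a : ecoord (c *: a) = c *: ecoord a.
Proof. by case: env_coord_linear. Qed.
Lemma env_coord0 : ecoord 0 = 0.
Proof. by case: env_coord_linear. Qed.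
Lemma env_coord_sum (I : Type) (r : seq I) (F : I -> E) :
  ecoord (\sum_(i <- r) F i) = \sum_(i <- r) ecoord (F i).
Proof. exact: (big_morph ecoord env_coordD env_coord0). Qed.
Lemma env_coord_basis m : ecoord (basis m) = 'X_[m].
Proof. by rewrite -(linX basis m) (env_spanK Env). Qed.
Lemma env_coord_eq0 a : ecoord a = 0 -> a = 0.
Proof. by move=> h; rewrite -(env_coordK Env a) h /env_span msupp0 big_nil. Qed.

Lemma env_l0 : lam 0 = 0.
Proof. by apply/eqP; rewrite -(subrr (lam 0)) -{2}(addr0 0) env_l_add addrK. Qed.
Lemma env_r0 : rho 0 = 0.
Proof. by apply/eqP; rewrite -(subrr (rho 0)) -{2}(addr0 0) env_r_add addrK. Qed.

Lemma env_l_expand a : lam a = \sum_(m <- msupp (coord a)) (coord a)@_m *: lam (smono x m).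
Proof.
rewrite {1}(pbw_expand P a) (big_morph lam (env_l_add Env) env_l0).
by apply: eq_bigr => m _; rewrite env_l_scale.
Qed.
Lemma env_r_expand a : rho a = \sum_(m <- msupp (coord a)) (coord a)@_m *: rho (smono x m).
Proof.
rewrite {1}(pbw_expand P a) (big_morph rho (env_r_add Env) env_r0).
by apply: eq_bigr => m _; rewrite env_r_scale.
Qed.

Lemma env_basis_smono a b : lam (smono x a) * rho (smono x b) = basis (join a (mop b)).
Proof. by rewrite /env_basis lpart_join rpart_join mopK. Qed.

Lemma env_lrM a b u v : lam a * rho b * (lam u * rho v) = lam (a * u) * rho (v * b).
Proof.
by rewrite env_l_mul env_r_mul -mulrA [rho b * _]mulrA -env_comm !mulrA.
Qed.

(* [h] evaluated on a bilinear map [Psi], as if [h] were the tensor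
   [sum_m c_m x^(lpart m) (x) x^(mop (rpart m))]. *)
Definition env_bilin (Psi : R -> R -> R) (h : E) : R :=
  lin (fun m => Psi (smono x (lpart m)) (smono x (mop (rpart m)))) (ecoord h).

Section Bilinear.
Variable Psi : R -> R -> R.

Lemma env_bilinD a b : env_bilin Psi (a + b) = env_bilin Psi a + env_bilin Psi b.
Proof. by rewrite /env_bilin env_coordD linD. Qed.
Lemma env_bilinZ c a : env_bilin Psi (c *: a) = c *: env_bilin Psi a.
Proof. by rewrite /env_bilin env_coordZ linZ. Qed.
Lemma env_bilin0 : env_bilin Psi 0 = 0.
Proof. by rewrite /env_bilin env_coord0 lin0. Qed.
Lemma env_bilinN a : env_bilin Psi (- a) = - env_bilin Psi a.
Proof. by rewrite -scaleN1r env_bilinZ scaleN1r. Qed.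
Lemma env_bilin_sum (I : Type) (r : seq I) (F : I -> E) :
  env_bilin Psi (\sum_(i <- r) F i) = \sum_(i <- r) env_bilin Psi (F i).
Proof. exact: (big_morph (env_bilin Psi) env_bilinD env_bilin0). Qed.
Lemma env_bilin_basis m :
  env_bilin Psi (basis m) = Psi (smono x (lpart m)) (smono x (mop (rpart m))).
Proof. by rewrite /env_bilin env_coord_basis linX. Qed.

Hypotheses (PsiDl : forall u v w, Psi (u + v) w = Psi u w + Psi v w)
  (PsiZl : forall c u w, Psi (c *: u) w = c *: Psi u w)
  (PsiDr : forall u v w, Psi w (u + v) = Psi w u + Psi w v)
  (PsiZr : forall c u w, Psi w (c *: u) = c *: Psi w u).

Lemma env_bilin_lr a b : env_bilin Psi (lam a * rho b) = Psi a b.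
Proof.
have Psi0l w : Psi 0 w = 0 by apply: (@addrI _ (Psi 0 w)); rewrite -PsiDl !addr0.
have Psi0r w : Psi w 0 = 0 by apply: (@addrI _ (Psi w 0)); rewrite -PsiDr !addr0.
rewrite env_l_expand env_r_expand [in RHS](pbw_expand P a) [in RHS](pbw_expand P b).
rewrite mulr_suml env_bilin_sum (big_morph (fun u => Psi u _) (fun u v => PsiDl u v _) (Psi0l _)).
apply: eq_bigr => m1 _.
rewrite mulr_sumr env_bilin_sum PsiZl (big_morph (fun u => Psi _ u) (fun u v => PsiDr u v _) (Psi0r _)) scaler_sumr.
apply: eq_bigr => m2 _.
by rewrite -scalerAl -scalerAr !env_bilinZ env_basis_smono env_bilin_basis
  lpart_join rpart_join mopK PsiZr.
Qed.

End Bilinear.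

Lemma env_mulE h : env_mul Env h = env_bilin *%R h.
Proof. by []. Qed.

Lemma env_actE q h (u : 'rV[R]_q) j : env_act Env h u 0 j = env_bilin (fun a b => a * u 0 j * b) h.
Proof. by rewrite /env_act summxE; apply: eq_bigr => m _; rewrite mxE. Qed.

Lemma env_mul_lr a b : env_mul Env (lam a * rho b) = a * b.
Proof.
apply: env_bilin_lr => [u v w | c u w | u v w | c u w].
- exact: mulrDl.
- by rewrite scalerAl.
- exact: mulrDr.
- by rewrite scalerAr.
Qed.

Lemma env_act_lr q a b (u : 'rV[R]_q) : env_act Env (lam a * rho b) u = rbiact a u b.
Proof.
apply/rowP => j; rewrite env_actE mxE.
apply: env_bilin_lr => [u' v w | c u' w | u' v w | c u' w].
- by rewrite !mulrDl.
- by rewrite -!scalerAl.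
- exact: mulrDr.
- by rewrite scalerAr.
Qed.

Lemma env_actD q h1 h2 (u : 'rV[R]_q) :
  env_act Env (h1 + h2) u = env_act Env h1 u + env_act Env h2 u.
Proof. by apply/rowP => j; rewrite mxE !env_actE env_bilinD. Qed.
Lemma env_act0 q (u : 'rV[R]_q) : env_act Env 0 u = 0.
Proof. by apply/rowP => j; rewrite mxE env_actE env_bilin0. Qed.

Lemma env_mul_l a : env_mul Env (lam a) = a.
Proof. by rewrite -[lam a]mulr1 -(env_r_one Env) env_mul_lr mulr1. Qed.
Lemma env_mul_r a : env_mul Env (rho a) = a.
Proof. by rewrite -[rho a]mul1r -(env_l_one Env) env_mul_lr mul1r. Qed.

Lemma env_mul_biact a b h : env_mul Env (lam a * rho b * h) = a * env_mul Env h * b.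
Proof.
rewrite -(env_coordK Env h) mulr_sumr !env_mulE !env_bilin_sum mulr_sumr mulr_suml.
apply: eq_bigr => m _; rewrite -scalerAr !env_bilinZ -scalerAr -scalerAl.
by rewrite /env_basis env_lrM -!env_mulE !env_mul_lr !mulrA.
Qed.

Definition env_embed o (a : R) : E := if left_kind o then lam a else rho a.

Lemma env_mul_embed o a : env_mul Env (env_embed o a) = a.
Proof. by rewrite /env_embed; case: ifP => _; [exact: env_mul_l | exact: env_mul_r]. Qed.

Lemma env_coord_embed o a :
  ecoord (env_embed o a) = \sum_(al <- msupp (coord a)) (coord a)@_al *: 'X_[embed_exp o al].
Proof.
rewrite /env_embed /embed_exp; case: ifP => _;
  rewrite (env_l_expand, env_r_expand) env_coord_sum; apply: eq_bigr => al _;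
  rewrite env_coordZ.
- by rewrite -[lam _]mulr1 -(env_r_one Env) -(smono0 P) env_basis_smono env_coord_basis mop0.
- by rewrite -[rho _]mul1r -(env_l_one Env) -(smono0 P) env_basis_smono env_coord_basis.
Qed.

End Envelope.

Section BiSpan.
Variables (A : Type) (V : zmodType) (biact : A -> V -> A -> V).
Implicit Types (G : seq V).

Lemma bispan0 G : bispan biact G 0.
Proof.
have ord0_elim (T : Type) (i : 'I_0) : T by case: i.
by exists 0%N, (ord0_elim _), (ord0_elim _), (ord0_elim _); rewrite big_ord0.
Qed.

Lemma bispanD G v w : bispan biact G v -> bispan biact G w -> bispan biact G (v + w).
Proof.
case=> N1 [a1 [b1 [i1 ->]]] [N2 [a2 [b2 [i2 ->]]]].
pose glue T (u1 : 'I_N1 -> T) (u2 : 'I_N2 -> T) (j : 'I_(N1 + N2)) := match split j with inl j1 => u1 j1 | inr j2 => u2 j2 end.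
exists (N1 + N2)%N, (glue _ a1 a2), (glue _ b1 b2), (glue _ i1 i2).
rewrite big_split_ord /=; congr (_ + _); apply: eq_bigr => j _; rewrite /glue.
- by rewrite (unsplitK (inl j : 'I_N1 + 'I_N2)).
- by rewrite (unsplitK (inr j : 'I_N1 + 'I_N2)).
Qed.

Lemma bispan_gen G a g b : g \in G -> bispan biact G (biact a g b).
Proof.
move=> gG; have hi : (index g G < size G)%N by rewrite index_mem.
by exists 1%N, (fun _ => a), (fun _ => b), (fun _ => Ordinal hi); rewrite big_ord1 /= nth_index.
Qed.

Lemma bispan_ind G (Q : V -> Prop) : Q 0 -> (forall v w, Q v -> Q w -> Q (v + w)) ->
  (forall a g b, g \in G -> Q (biact a g b)) -> forall v, bispan biact G v -> Q v.
Proof.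
move=> Q0 QD Qg v [N [a [b [idx ->]]]].
by apply: (big_ind Q Q0 QD) => j _; apply/Qg/mem_nth.
Qed.

Lemma bispan_sum G (I : Type) (r : seq I) (F : I -> V) :
  (forall i, bispan biact G (F i)) -> bispan biact G (\sum_(i <- r) F i).
Proof. by move=> h; apply: big_ind => //; [exact: bispan0 | exact: bispanD]. Qed.

Lemma bispan_filter_neq0 G v : (forall a b, biact a 0 b = 0) ->
  bispan biact G v <-> bispan biact [seq g <- G | g != 0] v.
Proof.
move=> biact0; split; apply: bispan_ind; try exact: bispan0; try exact: bispanD.
- move=> a g b gG; have [->|g0] := eqVneq g 0; first by rewrite biact0; exact: bispan0.
  by apply: bispan_gen; rewrite mem_filter g0.
- by move=> a g b; rewrite mem_filter => /andP[_]; exact: bispan_gen.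
Qed.

End BiSpan.

Lemma mem_map_enum (V : eqType) T (F : 'I_T -> V) g :
  g \in [seq F j | j <- enum 'I_T] <-> exists j, g = F j.
Proof.
split; first by case/mapP => j _ ->; exists j.
by case=> j ->; apply: map_f; rewrite mem_enum.
Qed.

Section RowBiAction.
Variables (R : pzRingType) (s : nat).
Implicit Types (v w : 'rV[R]_s) (G : seq 'rV[R]_s).

Lemma rbiact0 a b : rbiact a (0 : 'rV[R]_s) b = 0.
Proof. by apply/rowP => j; rewrite !mxE mulr0 mul0r. Qed.
Lemma rbiactD a v w b : rbiact a (v + w) b = rbiact a v b + rbiact a w b.
Proof. by apply/rowP => j; rewrite !mxE mulrDr mulrDl. Qed.
Lemma rbiactA a a' v b' b : rbiact a (rbiact a' v b') b = rbiact (a * a') v (b' * b).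
Proof. by apply/rowP => j; rewrite !mxE !mulrA. Qed.
Lemma rbiactN1 v : rbiact (-1) v 1 = - v.
Proof. by apply/rowP => j; rewrite !mxE mulr1 mulN1r. Qed.

Lemma bispan_rbiact G v a b : bispan rbiact G v -> bispan rbiact G (rbiact a v b).
Proof.
move: v; apply: bispan_ind.
- by rewrite rbiact0; exact: bispan0.
- by move=> v w hv hw; rewrite rbiactD; exact: bispanD.
- by move=> a' g b' gG; rewrite rbiactA; exact: bispan_gen.
Qed.

Lemma bispanN G v : bispan rbiact G v -> bispan rbiact G (- v).
Proof. by rewrite -rbiactN1; exact: bispan_rbiact. Qed.

End RowBiAction.

Lemma mxcol_Rank (T : Type) (r : nat) (t : 'I_r -> nat) q (B : forall i, 'M[T]_(t i, q))
    (i : 'I_r) (l : 'I_(t i)) c :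
  mxcol B (tagnat.Rank i l) c = B i l c.
Proof. by rewrite mxE /tagnat.sig1 /tagnat.sig2 /tagnat.Rank tagnat.rankK. Qed.

Lemma big_tagnat (V : nmodType) (r : nat) (t : 'I_r -> nat) (F : 'I_(\sum_i t i) -> V) :
  \sum_(q < \sum_i t i) F q = \sum_(i < r) \sum_(l < t i) F (tagnat.Rank i l).
Proof.
rewrite (reindex (@tagnat.rank r t)) /=; last first.
  by exists (@tagnat.sig r t) => p _; [exact: tagnat.rankK | exact: tagnat.sigK].
rewrite (sig_big_dep xpredT (fun i => xpredT) (fun i (l : 'I_(t i)) => F (tagnat.Rank i l))).
by apply: eq_bigr => -[i l].
Qed.

Section ExpOfVectors.
Variables (k : fieldType) (A : pzRingType) (N : nat) (coord : A -> {mpoly k[N]}).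
Variable le : rel 'X_{1..N}.
Hypotheses (coord0 : coord 0 = 0) (coord_eq0 : forall a, coord a = 0 -> a = 0).

Lemma is_exp_zero_below q (w : 'rV[A]_q) e (i : 'I_q) :
  is_exp coord le w e -> (i < e.2)%N -> w 0 i = 0.
Proof.
case=> _ w_below ie; apply: coord_eq0; apply/mpolyP => m; rewrite mcoeff0.
apply: contraTeq ie => /(w_below (m, i)); rewrite /pot_le /= -leqNgt.
by case/orP=> [/ltnW // | /andP[/eqP-> _]].
Qed.

Lemma is_exp_neq0 q (w : 'rV[A]_q) e : is_exp coord le w e -> w != 0.
Proof. by case=> + _; apply: contra_neq => ->; rewrite /vcoef mxE coord0 mcoeff0. Qed.

End ExpOfVectors.

Lemma is_exp_has_lead (k : fieldType) (R : algType k) (n : nat) (P : PBW R n) q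
    (w : 'rV[R]_q) (j : 'I_q) D :
  has_lead P D (w 0 j) -> (forall i : 'I_q, (i < j)%N -> w 0 i = 0) ->
  is_exp (pbw_coord P) (pbw_le P) w (D, j).
Proof.
move=> [wD0 wD_le] w_below; split=> // -[m i]; rewrite /vcoef /pot_le /= => wmi.
case: (ltngtP i j) => [ij | // | /val_inj eij].
- by move: wmi; rewrite w_below // pbw_coord0 mcoeff0 eqxx.
- by subst i; rewrite eqxx wD_le ?orbT // mcoeff_msupp.
Qed.

Section Intersection.
Variables (k : fieldType) (R : algType k) (n : nat) (P : PBW R n).
Variables (E : algType k) (Env : Envelope P E).
Variables (s r : nat) (t : 'I_r -> nat) (f : forall i : 'I_r, 'I_(t i) -> 'rV[R]_s).
Local Notation x := (pbw_x P).
Local Notation coord := (pbw_coord P).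
Local Notation le := (pbw_le P).
Local Notation lam := (env_l Env).
Local Notation rho := (env_r Env).
Local Notation ecoord := (env_coord Env).
Local Notation emul := (env_mul Env).
Local Notation emulv := (env_mul_vec Env).
Local Notation Rk := (@tagnat.Rank r t).
Local Notation F i := [seq @f i l | l <- enum 'I_(t i)].
Local Notation Inter := (fun v : 'rV[R]_s => forall i : 'I_r, bispan rbiact (F i) v).

Lemma Syz_HmatP (h : 'rV[E]_(s + \sum_i t i)) : Syz Env (H_mat f) h <->
  forall i : 'I_r,
    emulv (lsubmx h) + \sum_(l < t i) env_act Env (h 0 (rshift s (Rk i l))) (@f i l) = 0.
Proof.
have bilin0 h' : env_bilin Env (fun a b => a * 0 * b) h' = 0.
  by rewrite /env_bilin /lin big1 // => m _; rewrite mulr0 mul0r scaler0.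
have block i j :
    (\sum_(q < s + \sum_i t i) env_act Env (h 0 q) (row q (H_mat f))) 0 (mxvec_index i j)
    = (emulv (lsubmx h) + \sum_(l < t i) env_act Env (h 0 (rshift s (Rk i l))) (@f i l)) 0 j.
  rewrite [RHS]mxE summxE [in RHS]mxE [in RHS]mxE summxE big_split_ord /=.
  congr (_ + _).
    rewrite (bigD1 j) //= [X in _ + X = _]big1 ?addr0 => [|j' nj'].
      rewrite env_actE mxE col_mxEu mxE mxvecE mxE eqxx.
      by apply: eq_lin => m _; rewrite mulr1.
    by rewrite env_actE mxE col_mxEu mxE mxvecE mxE eq_sym (negbTE nj') bilin0.
  rewrite big_tagnat (bigD1 i) //= [X in _ + X = _]big1 ?addr0 => [|i' ni'].
    by apply: eq_bigr => l _; rewrite !env_actE mxE col_mxEd mxcol_Rank mxE mxvecE mxE eqxx.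
  apply: big1 => l _; rewrite env_actE mxE col_mxEd mxcol_Rank mxE mxvecE mxE.
  by rewrite eq_sym (negbTE ni') bilin0.
rewrite /Syz; split=> [hS i | hS]; first by apply/rowP => j; rewrite -block hS !mxE.
by apply/rowP => c; rewrite mxE; case/mxvec_indexP: c => i j; rewrite block hS mxE.
Qed.

Lemma bispan_env_act q (G : seq 'rV[R]_q) h u : u \in G -> bispan rbiact G (env_act Env h u).
Proof.
move=> uG; have -> : env_act Env h u = \sum_(m <- msupp (ecoord h))
    rbiact ((ecoord h)@_m *: smono x (lpart m)) u (smono x (mop (rpart m))).
  apply/rowP => j; rewrite env_actE summxE; apply: eq_bigr => m _.
  by rewrite !mxE -!scalerAl.
by apply: bispan_sum => m; exact: bispan_gen.
Qed.

Lemma bispan_env_act_sum i w : bispan rbiact (F i) w ->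
  exists c : 'I_(t i) -> E, w = \sum_(l < t i) env_act Env (c l) (@f i l).
Proof.
move: w; apply: bispan_ind.
- by exists (fun _ => 0); rewrite big1 // => l _; rewrite env_act0.
- move=> v w [c1 ->] [c2 ->]; exists (fun l => c1 l + c2 l).
  by rewrite -big_split; apply: eq_bigr => l _; rewrite env_actD.
move=> a g b /mem_map_enum [l0 ->].
exists (fun l => if l == l0 then lam a * rho b else 0).
rewrite (bigD1 l0) //= eqxx big1 ?addr0 ?env_act_lr // => l /negbTE ->.
exact: env_act0.
Qed.

(* The remaining coordinates are minus the coefficients of [v] in each [M_i]. *)
Lemma Syz_lift (L : R -> E) (v : 'rV[R]_s) : cancel L emul -> Inter v ->
  exists h, Syz Env (H_mat f) h /\ forall j, h 0 (lshift _ j) = L (v 0 j).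
Proof.
move=> LK /(_ _)/bispan_env_act_sum v_comb.
have [C HC] := fin_all_exists v_comb.
pose h : 'rV[E]_(s + \sum_i t i) := \row_q
  match split q with
  | inl j => L (v 0 j)
  | inr q' => - C (tagnat.sig1 q') (tagnat.sig2 q')
  end.
have h_l j : h 0 (lshift _ j) = L (v 0 j).
  by rewrite mxE (unsplitK (inl j : 'I_s + 'I_(\sum_i t i))).
have h_r i l : h 0 (rshift s (Rk i l)) = - C i l.
  rewrite mxE (unsplitK (inr (Rk i l) : 'I_s + 'I_(\sum_i t i))).
  by rewrite /tagnat.sig1 /tagnat.sig2 /tagnat.Rank tagnat.rankK.
exists h; split=> //; apply/Syz_HmatP => i; apply/rowP => j.
rewrite mxE [emulv _ _ _]mxE [lsubmx _ _ _]mxE h_l LK summxE.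
rewrite {1}(HC i) summxE -big_split mxE /=.
by apply: big1 => l _; rewrite h_r !env_actE env_bilinN subrr.
Qed.

Lemma env_mul_vecD m (u w : 'rV[E]_m) : emulv (u + w) = emulv u + emulv w.
Proof. by apply/rowP => j; rewrite !mxE !env_mulE env_bilinD. Qed.
Lemma env_mul_vec0 m : emulv (0 : 'rV[E]_m) = 0.
Proof. by apply/rowP => j; rewrite !mxE env_mulE env_bilin0. Qed.
Lemma env_mul_vec_biact m a b (u : 'rV[E]_m) :
  emulv (env_biact Env a u b) = rbiact a (emulv u) b.
Proof. by apply/rowP => j; rewrite !mxE env_mul_biact. Qed.

Section Generators.
Variables (T : nat) (g : 'I_T -> 'rV[E]_(s + \sum_i t i)).
Hypothesis Syz_span : forall h,
  Syz Env (H_mat f) h <-> bispan (env_biact Env) [seq g j | j <- enum 'I_T] h.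
Local Notation G' := [seq emulv (lsubmx (g j)) | j <- enum 'I_T].

Lemma gen_Syz j : Syz Env (H_mat f) (g j).
Proof.
apply/Syz_span; rewrite -[g j]scale1r -[1 : E]mulr1 -{1}(env_l_one Env) -(env_r_one Env).
by apply: bispan_gen; apply/mem_map_enum; exists j.
Qed.

Lemma bispan_env_mul_lsub h : bispan (env_biact Env) [seq g j | j <- enum 'I_T] h ->
  bispan rbiact G' (emulv (lsubmx h)).
Proof.
move: h; apply: bispan_ind.
- by rewrite linear0 env_mul_vec0; exact: bispan0.
- by move=> u w hu hw; rewrite linearD env_mul_vecD; exact: bispanD.
move=> a g0 b /mem_map_enum [j ->]; rewrite linearZ_LR /= env_mul_vec_biact.
by apply: bispan_gen; apply/mem_map_enum; exists j.
Qed.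

Lemma Inter_env_mul_gen j : Inter (emulv (lsubmx (g j))).
Proof.
move=> i; have /Syz_HmatP/(_ i)/eqP := gen_Syz j.
rewrite addr_eq0 => /eqP ->; apply/bispanN/bispan_sum => l.
by apply: bispan_env_act; apply/mem_map_enum; exists l.
Qed.

Theorem Inter_bispanE v : Inter v <-> bispan rbiact G' v.
Proof.
split=> [v_in | ].
  have [h [h_syz h_l]] := Syz_lift (@env_mul_l _ _ _ _ _ Env) v_in.
  have -> : v = emulv (lsubmx h) by apply/rowP => j; rewrite !mxE h_l env_mul_l.
  exact/bispan_env_mul_lsub/Syz_span.
move: v; apply: bispan_ind => [i | v w hv hw i | a g0 b /mem_map_enum [j ->] i].
- exact: bispan0.
- exact: bispanD.
- exact/bispan_rbiact/Inter_env_mul_gen.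
Qed.

Lemma cone_sub_Exp_inter e :
  in_exp_cone coord le [seq v <- G' | v != 0] e -> Exp coord le Inter e.
Proof.
case: e => a0 j0 [w /[!mem_filter] /andP[w0 /mem_map_enum [j1 ew]]].
case=> -[a j] [w_exp [/= -> [c /= ->]]].
pose v := rbiact (smono x c) w 1.
have v_lead : has_lead P (c + a)%MM (v 0 j).
  rewrite mxE mulr1; apply: has_lead_smonoMl; split; first by case: w_exp.
  move=> m /[!mcoeff_msupp] /(proj2 w_exp (m, j)).
  by rewrite /pot_le /= ltnn eqxx.
have v_below (i : 'I_s) : (i < j)%N -> v 0 i = 0.
  move=> ij; rewrite mxE (is_exp_zero_below (@pbw_coord_eq0 _ _ _ P) w_exp) //.
  by rewrite mulr0 mul0r.
have v_exp := is_exp_has_lead v_lead v_below; rewrite addmC in v_exp.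
exists v; split=> //; last exact: (is_exp_neq0 (pbw_coord0 P) v_exp).
by move=> i; apply: bispan_rbiact; rewrite ew; exact: Inter_env_mul_gen.
Qed.

Section OrderKind.
Variable o : env_order_kind.
Local Notation ole := (env_order le o).

Lemma is_exp_lift (v : 'rV[R]_s) (h : 'rV[E]_(s + \sum_i t i)) a0 (j : 'I_s) :
  (forall i, h 0 (lshift _ i) = env_embed Env o (v 0 i)) -> is_exp coord le v (a0, j) ->
  is_exp ecoord ole h (embed_exp o a0, lshift _ j).
Proof.
move=> h_l [va0 v_le]; split.
  by rewrite /vcoef /= h_l env_coord_embed mcoeff_reindex //; exact: embed_exp_inj.
move=> [m q]; rewrite /vcoef /= -(splitK q); case: (split q) => [i | q'] /=.
  rewrite h_l env_coord_embed => /mcoeff_reindex_neq0 [a [-> ha]].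
  move: (v_le (a, i) ha); rewrite /pot_le /= => /orP[-> // | /andP[/eqP-> ale]].
  by rewrite eqxx (env_order_embed_exp (pbw_admissible P)) ?orbT.
by move=> _; rewrite /pot_le /= (leq_trans (ltn_ord j) (leq_addr _ _)).
Qed.

Lemma is_exp_env_mul_lsub (h : 'rV[E]_(s + \sum_i t i)) b (j : 'I_s) :
  is_exp ecoord ole h (embed_exp o b, lshift _ j) ->
  is_exp coord le (emulv (lsubmx h)) (b, j).
Proof.
move=> h_exp; apply: is_exp_has_lead => [|i ij]; last first.
  by rewrite !mxE (is_exp_zero_below (@env_coord_eq0 _ _ _ _ _ Env) h_exp) ?env_mulE
    ?env_bilin0.
rewrite !mxE env_mulE /env_bilin /lin.
set M := embed_exp o b; set p := ecoord (h 0 (lshift _ j)).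
have M_supp : M \in msupp p by rewrite mcoeff_msupp; case: h_exp.
rewrite (bigD1_seq M) ?msupp_uniq //=.
apply: has_leadD.
  apply: has_leadZ; first by rewrite -mcoeff_msupp.
  by rewrite -[b in has_lead _ b](env_mul_exp_embed o); exact: has_lead_smonoM.
rewrite big_seq_cond; apply: supp_lt_sum => m /andP[m_supp mM]; apply: supp_ltZ.
have m_le : ole m M.
  move: (proj2 h_exp (m, lshift _ j)); rewrite /vcoef /= -/p -mcoeff_msupp.
  by move=> /(_ m_supp); rewrite /pot_le /= ltnn eqxx.
apply: supp_le_lt (env_mul_exp_lt (pbw_admissible P) m_le mM).
by case: (has_lead_smonoM P (lpart m) (mop (rpart m))).
Qed.

Lemma Exp_inter_sub_cone e :
  left_GB ecoord ole (Syz Env (H_mat f)) [seq g j | j <- enum 'I_T] ->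
  Exp coord le Inter e -> in_exp_cone coord le [seq v <- G' | v != 0] e.
Proof.
case=> _ _ GB_exp; case: e => a0 j [v [v_in _ v_exp]].
have [h [h_syz h_l]] := Syz_lift (env_mul_embed Env o) v_in.
have h_exp := is_exp_lift h_l v_exp.
have [_ /mem_map_enum [j0 ->] [[M q] [g_exp [/= eq [C /= eM]]]]] :
    in_exp_cone ecoord ole [seq g j | j <- enum 'I_T] (embed_exp o a0, lshift _ j).
  by apply/GB_exp; exists h; split=> //; exact: (is_exp_neq0 (env_coord0 Env) h_exp).
subst q; have [eM' [c ea0]] := embed_exp_addE eM; rewrite eM' in g_exp.
have w_exp := is_exp_env_mul_lsub g_exp.
exists (emulv (lsubmx (g j0))).
  by rewrite mem_filter (is_exp_neq0 (pbw_coord0 P) w_exp); apply/mem_map_enum; exists j0.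
by exists (env_mul_exp M, j); split=> //; split=> //; exists c.
Qed.

End OrderKind.

End Generators.

End Intersection.

Unset Implicit Arguments.

Theorem mainTheorem9 (k : fieldType) (R : algType k) (n : nat) (P : PBW R n)
  (E : algType k) (Env : Envelope P E)
  (s r : nat) (t : 'I_r -> nat) (f : forall i : 'I_r, 'I_(t i) -> 'rV[R]_s)
  (T : nat) (g : 'I_T -> 'rV[E]_(s + \sum_i t i)) :
  (forall h, Syz Env (H_mat f) h <-> bispan (env_biact Env) [seq g j | j <- enum 'I_T] h) ->
  let Inter := fun v : 'rV[R]_s =>
    forall i : 'I_r, bispan (@rbiact R s) [seq @f i l | l <- enum 'I_(t i)] v in
  let G' := [seq env_mul_vec Env (lsubmx (g j)) | j <- enum 'I_T] in
  (forall v, Inter v <-> bispan (@rbiact R s) G' v) /\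
  (forall o : env_order_kind,
     left_GB (env_coord Env) (env_order (pbw_le P) o) (Syz Env (H_mat f))
             [seq g j | j <- enum 'I_T] ->
     twosided_GB (pbw_coord P) (pbw_le P) (@rbiact R s) Inter
                 [seq v <- G' | v != 0]).
Proof.
move=> Syz_span Inter G'; split=> [v | o GB]; first exact: Inter_bispanE.
split.
- move=> w; rewrite mem_filter => /andP[w0 /mem_map_enum [j ew]]; split=> //.
  by rewrite ew; exact: Inter_env_mul_gen.
- move=> v; apply: iff_trans (Inter_bispanE Syz_span v) _.
  by apply: bispan_filter_neq0 => a b; exact: rbiact0.
- move=> e; split; first exact: Exp_inter_sub_cone GB.
  exact: (cone_sub_Exp_inter Syz_span).
Qed.
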